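(* Let $w$ be a nonempty string. For any two strings $u, v \in \mathit{LFCand}(w)$ with $|u| < |v|$, $u$ is a prefix of $v$.
   Context: Let $\Sigma$ be a finite ordered alphabet, $\Sigma^+$ the set of nonempty strings over $\Sigma$. For nonempty strings $x,y$, write $x \prec y$ if either $x$ is a proper prefix of $y$, or at the first position $k$ where $x$ and $y$ differ we have $x[k] \prec y[k]$. For a set $S$ of nonempty strings, $\min_\prec S$ is its lexicographically smallest element. $\mathit{Suffix}(w)$ denotes the set of (nonempty) suffixes of $w$. For a nonempty string $w$, $\mathit{LFCand}(w) = \{x \in \mathit{Suffix}(w) \mid \exists y \in \Sigma^+ \text{ such that } xy = \min_\prec \mathit{Suffix}(wy)\}$. *)

From mathcomp Require Import all_boot all_order.
Set Implicit Arguments. Unset Strict Implicit. Unset Printing Implicit Defensive.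
Import Order.TTheory.
Local Open Scope order_scope.

Section Lex.
Context {d : Order.disp_t} {T : finOrderType d}.

Definition lexlt (x y : seq T) : Prop :=
  (prefix x y /\ (size x < size y)%N) \/
  exists k : nat, exists a : T,
    [/\ (k < size x)%N, (k < size y)%N,
        take k x = take k y & (nth a x k < nth a y k)%O].

Definition is_suffix (x w : seq T) : Prop := x <> [::] /\ suffix x w.

Definition is_min_suffix (x s : seq T) : Prop :=
  is_suffix x s /\ forall z, is_suffix z s -> z = x \/ lexlt x z.

Definition LFCand (w : seq T) (x : seq T) : Prop :=
  is_suffix x w /\
  exists y : seq T, y <> [::] /\ is_min_suffix (x ++ y) (w ++ y).

End Lex.

(* If [u] were not a prefix of [v], they would first differ at some position
   [|p| < |u|], with letters [x != y].  Appending any [z] keeps that first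
   difference, so [v z] and [u z] compare like [y] and [x].  Minimality of
   [v yv] among the suffixes of [w yv] (of which [u yv] is one) forces
   [y < x], and symmetrically minimality of [u yu] forces [x < y]. *)

From mathcomp Require Import all_boot all_order.
Import Order.TTheory.

Section FirstMismatch.
Context {d : Order.disp_t} {T : finOrderType d}.
Implicit Types (p a b u v w z : seq T) (x y : T).

Lemma lexlt_first_mismatch {p a b x y} :
  x != y -> lexlt (p ++ x :: a) (p ++ y :: b) -> (x < y)%O.
Proof.
move=> neq_xy [[pre _] | [k [c [_ _ eq_take lt_k]]]].
  by move: pre; rewrite prefix_catr // eqxx /= (negbTE neq_xy).
move: lt_k eq_take; case: (ltngtP k (size p)) => [lt_kp | lt_pk | ->].
- by rewrite !nth_cat lt_kp ltxx.
- move=> _ /(congr1 (fun s => nth c s (size p))).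
  by rewrite /= !nth_take // !nth_cat ltnn subnn /= => /eqP; rewrite (negbTE neq_xy).
- by rewrite !nth_cat ltnn subnn.
Qed.

Lemma not_prefix_first_mismatch {u v} : (size u <= size v)%N -> ~~ prefix u v ->
  exists p x y a b, [/\ u = p ++ x :: a, v = p ++ y :: b & x != y].
Proof.
elim: u v => [|x u IHu] [|y v] //= le_uv.
rewrite negb_and; have [<- /= not_pre | neq_xy _] := eqVneq x y.
  have [p [x' [y' [a [b [-> -> neq]]]]]] := IHu v le_uv not_pre.
  by exists (x :: p), x', y', a, b.
by exists [::], x, y, u, v.
Qed.

Lemma is_suffix_cat {u w} z : is_suffix u w -> is_suffix (u ++ z) (w ++ z).
Proof.
move=> [u_nil /suffixP [s ->]]; split; first by case: u u_nil.
by apply/suffixP; exists s; rewrite catA.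
Qed.

Lemma min_suffix_cat_lexlt {u v w z} : is_suffix u w ->
  is_min_suffix (v ++ z) (w ++ z) -> size u <> size v -> lexlt (v ++ z) (u ++ z).
Proof.
move=> suf_u [_ min_v] neq_size.
have [eq_uv | //] := min_v _ (is_suffix_cat z suf_u).
by move/(congr1 size): eq_uv; rewrite !size_cat => /addIn.
Qed.

End FirstMismatch.

Theorem lemma4 (d : Order.disp_t) (T : finOrderType d) (w u v : seq T) :
  w <> [::] -> LFCand w u -> LFCand w v -> (size u < size v)%N ->
  prefix u v.
Proof.
move=> _ [suf_u [yu [_ min_u]]] [suf_v [yv [_ min_v]]] lt_uv.
have neq_size : size u <> size v by apply/eqP; rewrite ltn_eqF.
have lt_vu_yv := min_suffix_cat_lexlt suf_u min_v neq_size.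
have lt_uv_yu := min_suffix_cat_lexlt suf_v min_u (nesym neq_size).
apply/negPn/negP => /(not_prefix_first_mismatch (ltnW lt_uv)).
move=> [p [x [y [a [b [eq_u eq_v neq_xy]]]]]].
rewrite {}eq_u {}eq_v -!catA /= in lt_vu_yv lt_uv_yu.
have neq_yx : y != x by rewrite eq_sym.
have lt_yx := lexlt_first_mismatch neq_yx lt_vu_yv.
have lt_xy := lexlt_first_mismatch neq_xy lt_uv_yu.
by move: lt_xy; rewrite ltNge (ltW lt_yx).
Qed.
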